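(* Assume the process is uniformly allowable with constant $\alpha>0$, and set $p_*=\alpha/2$. Let $\theta\in\mathcal I$, $k\in[N]$, $0<\tilde\delta<1$ and $\mathbf s\in[0,1]^N$. If there exists $i\in[N]$ with $\mathbf M_\theta(k,i)>0$ and $s_i<1-\tilde\delta$, then $f_\theta^{(k)}(\mathbf s)<1-p_*\tilde\delta$.
   Context: $N\ge2$, $\mathcal I$ a countable set, $[N]=\{0,\dots,N-1\}$. For each $\theta\in\mathcal I$ and $k\in[N]$, $f_\theta^{(k)}(\mathbf s)=\sum_{\mathbf z\in\mathbb N_0^N}f_\theta^{(k)}[\mathbf z]\mathbf s^{\mathbf z}$ ($\mathbf s^{\mathbf z}=\prod_j s_j^{z_j}$) is the pgf of a probability distribution on $\mathbb N_0^N$, and $\mathbf M_\theta(k,i)=\partial f_\theta^{(k)}/\partial s_i(\mathbf 1)$ (finite). Uniformly allowable with constant $\alpha$ means $\inf\{\sum_{\mathbf w\in\mathbb N_0^N:\,w_i\ne0}f_\theta^{(k)}[\mathbf w]:\theta\in\mathcal I,\ k,i\in[N],\ \mathbf M_\theta(k,i)>0\}>\alpha$. *)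

From HB Require Import structures.
From mathcomp Require Import all_boot all_order all_algebra.
From mathcomp Require Import all_classical all_reals all_analysis.
Set Implicit Arguments. Unset Strict Implicit. Unset Printing Implicit Defensive.
Import Order.TTheory GRing.Theory Num.Theory.
Import numFieldNormedType.Exports.
Local Open Scope classical_set_scope.
Local Open Scope ring_scope.

Definition is_prob (R : realType) (N : nat) (p : {ffun 'I_N -> nat} -> R) : Prop :=
  (forall z, 0 <= p z) /\
  (\esum_(z in [set: {ffun 'I_N -> nat}]) (p z)%:E = 1%E).

(* pgf  f(s) = sum_z p[z] s^z, with s^z = prod_j s_j^{z_j}  (extended-real valued;
   finite, in [0,1], for s in [0,1]^N) *)
Definition pgf (R : realType) (N : nat) (p : {ffun 'I_N -> nat} -> R)
  (s : 'I_N -> R) : \bar R :=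
  \esum_(z in [set: {ffun 'I_N -> nat}]) (p z * \prod_(j < N) s j ^+ z j)%:E.

(* m is the partial derivative  d f / d s_i  at the point 1 = (1,...,1).
   As f is only defined on [0,1]^N, this is the (one-sided, left) derivative
   along the i-th coordinate: lim_{h -> 0+} (f(1) - f(1 - h e_i)) / h = m. *)
Definition pgf_partial_at_one (R : realType) (N : nat)
  (p : {ffun 'I_N -> nat} -> R) (i : 'I_N) (m : R) : Prop :=
  (fun h : R => (fine (pgf p (fun _ => 1)) -
                 fine (pgf p (fun j => if j == i then 1 - h else 1))) / h)
    @ 0^'+ --> m.

(* inf { sum_{w : w_i <> 0} f_theta^(k)[w] : theta, k, i with M_theta(k,i) > 0 } > alpha
   (the infimum of the empty set being +oo). *)
Definition uniformly_allowable (R : realType) (N : nat) (I : Type)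
  (f : I -> 'I_N -> {ffun 'I_N -> nat} -> R) (M : I -> 'I_N -> 'I_N -> R)
  (alpha : R) : Prop :=
  exists beta : R, alpha < beta /\
    forall th k i, 0 < M th k i ->
      (beta%:E <= \esum_(w in [set w : {ffun 'I_N -> nat} | w i != 0%N]) (f th k w)%:E)%E.

From HB Require Import structures.
From mathcomp Require Import all_boot all_order all_algebra.
From mathcomp Require Import all_classical all_reals all_analysis.
From mathcomp Require Import lra.
Import Order.TTheory GRing.Theory Num.Theory.
Local Open Scope classical_set_scope.
Local Open Scope ring_scope.

(* Split the pgf at A = {w | w_i <> 0}.  On A the monomial s^w is at most
   s_i < 1 - dt, elsewhere at most 1, so f(s) + dt * P(A) <= 1; uniform
   allowability gives P(A) > alpha > alpha / 2. *)

Lemma ge0_esumZl (R : realType) (T : choiceType) (S : set T) (a : T -> \bar R) (c : R) :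
  0 <= c -> (forall x, 0 <= a x)%E ->
  (\esum_(i in S) (c%:E * a i) = c%:E * \esum_(i in S) a i)%E.
Proof.
move=> c0 a0; rewrite /esum -ereal_supZl //; last first.
  by apply/set0P; exists 0%E; exists set0; [exact: fsets_set0 | rewrite fsbig_set0].
congr ereal_sup; apply/seteqP; split=> x /=.
- move=> [X HX <-]; exists (\sum_(i \in X) a i)%R; first by exists X.
  by rewrite ge0_mule_fsumr.
- by move=> [y [X HX <-] <-]; exists X; rewrite // ge0_mule_fsumr.
Qed.

Section Monomial.
Context {R : realType} {N : nat} {s : 'I_N -> R}.
Hypothesis s01 : forall j, 0 <= s j <= 1.

Lemma prodr_exprn_in01 (z : 'I_N -> nat) (P : pred 'I_N) :
  0 <= \prod_(j < N | P j) s j ^+ z j <= 1.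
Proof.
apply/andP; split.
  by apply: prodr_ge0 => j _; case/andP: (s01 j) => s0 _; exact: exprn_ge0.
apply: prodr_ile1 => j _; case/andP: (s01 j) => s0 s1.
by rewrite exprn_ge0 //= exprn_ile1.
Qed.

Lemma prodr_exprn_le_coord {z : 'I_N -> nat} {i : 'I_N} :
  z i != 0%N -> \prod_(j < N) s j ^+ z j <= s i.
Proof.
move=> zi; rewrite (bigD1 i) //=.
have /andP[rest0 rest1] := prodr_exprn_in01 z (fun j => j != i).
have /andP[si0 si1] := s01 i.
apply: (le_trans (ler_wpM2l (exprn_ge0 _ si0) rest1)).
by rewrite mulr1 ler_iXnr // lt0n.
Qed.

End Monomial.

Lemma esum_weight_add_mass_le1 {R : realType} {T : choiceType}
    {p g : T -> R} (A : set T) (d : R) :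
  (forall z, 0 <= p z) -> \esum_(z in [set: T]) (p z)%:E = 1%E ->
  (forall z, 0 <= g z <= 1) -> (forall z, A z -> g z <= 1 - d) ->
  0 <= d <= 1 ->
  (\esum_(z in [set: T]) (p z * g z)%:E + d%:E * (\esum_(z in A) (p z)%:E) <= 1)%E.
Proof.
move=> p0 p1 g01 gA /andP[d0 d1].
have pE0 z : (0 <= (p z)%:E)%E by rewrite lee_fin.
have pg0 z : (0 <= (p z * g z)%:E)%E.
  by rewrite lee_fin mulr_ge0 //; case/andP: (g01 z).
have onA : (\esum_(z in A) (p z * g z)%:E <= (1 - d)%:E * (\esum_(z in A) (p z)%:E))%E.
  rewrite -ge0_esumZl ?subr_ge0 //.
  apply: le_esum => z Az; rewrite -EFinM lee_fin mulrC ler_wpM2r //.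
  exact: gA.
have offA : (\esum_(z in ~` A) (p z * g z)%:E <= \esum_(z in ~` A) (p z)%:E)%E.
  apply: le_esum => z _; rewrite lee_fin ler_piMr //.
  by case/andP: (g01 z).
have splitA (F : T -> \bar R) : (forall z, 0 <= F z)%E ->
    (\esum_(z in [set: T]) F z = \esum_(z in A) F z + \esum_(z in ~` A) F z)%E.
  by move=> F0; rewrite (esumID A) // !setTI.
rewrite -p1 !splitA //; apply: (le_trans (leeD (leeD onA offA) (lexx _))).
by rewrite addeAC -ge0_muleDl ?lee_fin ?subr_ge0 // -EFinD subrK mul1e.
Qed.

Theorem lemma5p7 (R : realType) (N : nat) (I : countType)
  (f : I -> 'I_N -> {ffun 'I_N -> nat} -> R) (M : I -> 'I_N -> 'I_N -> R)
  (alpha : R) :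
  (2 <= N)%N ->
  (forall th k, is_prob (f th k)) ->
  (forall th k i, pgf_partial_at_one (f th k) i (M th k i)) ->
  0 < alpha ->
  uniformly_allowable f M alpha ->
  forall (th : I) (k : 'I_N) (dt : R) (s : 'I_N -> R),
    0 < dt < 1 ->
    (forall j, 0 <= s j <= 1) ->
    (exists i, 0 < M th k i /\ s i < 1 - dt) ->
    (pgf (f th k) s < (1 - alpha / 2 * dt)%:E)%E.
Proof.
move=> _ hprob _ alpha0 [beta [alpha_lt_beta hallow]] th k dt s /andP[dt0 dt1]
  s01 [i [Mi si]].
have [p0 p1] := hprob th k.
have massA := hallow th k i Mi.
set A := [set w : {ffun 'I_N -> nat} | w i != 0%N] in massA.
have dt01 : 0 <= dt <= 1 by rewrite !ltW.
have := esum_weight_add_mass_le1 A dt p0 p1 (fun z => prodr_exprn_in01 s01 z xpredT)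
  (fun z zi => le_trans (prodr_exprn_le_coord s01 zi) (ltW si)) dt01.
move=> /(le_trans _) pgf_add_le; apply: (@le_lt_trans _ _ (1 - dt * beta)%:E).
  rewrite EFinB lee_suber_addr // pgf_add_le // leeD2l // EFinM.
  by rewrite lee_wpmul2l // lee_fin ltW.
rewrite lte_fin; nra.
Qed.
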